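(* Let $D_{2n}$ be the set of all Dyck words of length $2n$. Then $\mathrm{rpn}(D_{2n}) \geq n^{\Omega(\log n)}$.
   Context: The set $D\subseteq\{0,1\}^*$ of Dyck words is the smallest set with $\epsilon\in D$ and such that $v,w\in D$ implies $vw\in D$ and $0w1\in D$ (equivalently: words with equally many zeros and ones in which every prefix contains no more ones than zeros). $D_{2n}=D\cap\{0,1\}^{2n}$. Regular expressions are built from $\epsilon$ and letters by union and concatenation (no $\emptyset$); $\mathrm{rpn}(L)$ is the minimum number of syntax-tree nodes of an expression describing $L$. *)

(* Letters: 0 = false, 1 = true. *)
From Stdlib Require Import Reals List.
Import ListNotations.
Open Scope R_scope.

(* Regular expressions built from epsilon and letters by union and
   concatenation (no empty-set symbol). *)
Inductive regex : Type :=
| REps : regex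
| RLit : bool -> regex
| RUnion : regex -> regex -> regex
| RConcat : regex -> regex -> regex.

Fixpoint rsize (r : regex) : nat :=
  match r with
  | REps => 1
  | RLit _ => 1
  | RUnion r1 r2 => S (rsize r1 + rsize r2)
  | RConcat r1 r2 => S (rsize r1 + rsize r2)
  end%nat.

Fixpoint matches (r : regex) (w : list bool) : Prop :=
  match r with
  | REps => w = []
  | RLit b => w = [b]
  | RUnion r1 r2 => matches r1 w \/ matches r2 w
  | RConcat r1 r2 => exists u v, w = u ++ v /\ matches r1 u /\ matches r2 v
  end.

Definition describes (r : regex) (L : list bool -> Prop) : Prop :=
  forall w, matches r w <-> L w.

Definition is_rpn (L : list bool -> Prop) (m : nat) : Prop :=
  (exists r, describes r L /\ rsize r = m) /\
  (forall r, describes r L -> (m <= rsize r)%nat).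

Inductive dyck : list bool -> Prop :=
| dyck_nil : dyck []
| dyck_cat : forall v w, dyck v -> dyck w -> dyck (v ++ w)
| dyck_wrap : forall w, dyck w -> dyck ([false] ++ w ++ [true]).

Definition D2n (n : nat) : list bool -> Prop :=
  fun w => dyck w /\ length w = (2 * n)%nat.

(* A language is uniform when all its words have the same length m and the same number j
   of ones.  If an expression x describes a uniform language L, then
   |L| * 2^C(K,2) <= rsize x * 2^m  with  K = floor(log2 m) / 3.
   To see this, follow the syntax tree of x into the longer factor of every concatenation,
   adding the other factor to a left or right context, until the current subexpression
   has words of length l in (m/3, 2m/3].  The two contexts are again uniform, of lengths
   o and p with o + p >= m/3, so they contain at most C(o, _) C(p, _) words; this is
   smaller than 2^(o+p) by the factor 2^(K-1) that separates the bound at length l,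
   given by induction, from the bound at length m.  Unions merely add up.
   Dyck words of length 2n form a uniform language, and by the cycle lemma there are at
   least 4^n / (2n+1)^2 of them, whence rsize x >= 2^C(K,2) / (2n+1)^2 = n^Omega(log n). *)

From Stdlib Require Import Reals Lra Psatz.
From mathcomp Require Import ssreflect ssrfun ssrbool eqtype ssrnat seq div prime binomial fintype.
From mathcomp Require Import zify ring.
Set Implicit Arguments. Unset Strict Implicit. Unset Printing Implicit Defensive.
Local Open Scope nat_scope.

(** * Counting words *)

Definition ones (w : seq bool) := count id w.

Lemma ones_cat u v : ones (u ++ v) = ones u + ones v.
Proof. exact: count_cat. Qed.

Fixpoint words n : seq (seq bool) :=
  if n is k.+1 then map (cons false) (words k) ++ map (cons true) (words k) else [:: [::]].

Definition nwords (P : pred (seq bool)) n := count P (words n).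

Lemma mem_words n w : (w \in words n) = (size w == n).
Proof.
have consI (b : bool) : injective (cons b) by move=> x y [].
elim: n w => [|n IH] [|b w] //=; rewrite mem_cat.
  by apply/orP => -[] /mapP[].
have notin c c' : c != c' -> (c :: w \in map (cons c') (words n)) = false.
  by move=> neq; apply/mapP => -[v _ [eqc _]]; rewrite eqc eqxx in neq.
by rewrite eqSS -IH; case: b; rewrite (mem_map (consI _)) notin ?orbF.
Qed.

Lemma uniq_words n : uniq (words n).
Proof.
elim: n => //= n IH; rewrite cat_uniq !map_inj_uniq; try by move=> x y [].
rewrite IH /= andbT; apply/hasPn => _ /mapP[y _ ->]; by apply/mapP => -[z _].
Qed.

Lemma nwords_max P n : nwords P n <= 2 ^ n.
Proof.
rewrite /nwords; apply: leq_trans (count_size _ _) _.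
by elim: n => //= n IH; rewrite size_cat !size_map expnS; lia.
Qed.

Lemma nwordsS P n :
  nwords P n.+1 = nwords (fun w => P (false :: w)) n + nwords (fun w => P (true :: w)) n.
Proof. by rewrite /nwords /= count_cat !count_map. Qed.

Lemma eq_nwords n (P Q : pred (seq bool)) :
  (forall w, size w = n -> P w = Q w) -> nwords P n = nwords Q n.
Proof. by move=> PQ; apply: eq_in_count => w; rewrite mem_words => /eqP /PQ. Qed.

Lemma sub_nwords n (P Q : pred (seq bool)) :
  (forall w, size w = n -> P w -> Q w) -> nwords P n <= nwords Q n.
Proof.
move=> PQ; rewrite /nwords -!size_filter; apply: uniq_leq_size.
  by rewrite filter_uniq // uniq_words.
move=> w; rewrite !mem_filter mem_words => /andP[Pw /eqP sw].
by rewrite (PQ w sw Pw) sw eqxx.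
Qed.

Definition catpred a (X Y : pred (seq bool)) : pred (seq bool) :=
  fun w => X (take a w) && Y (drop a w).

Lemma nwords_catpred a b X Y : nwords (catpred a X Y) (a + b) = nwords X a * nwords Y b.
Proof.
elim: a X => [|a IH] X.
  rewrite /nwords /catpred /=; under eq_count do rewrite take0 drop0.
  by case: (X [::]); rewrite /= ?mul1n ?mul0n ?count_pred0.
by rewrite addSn nwordsS (nwordsS X) mulnDl -!IH.
Qed.

Lemma nwords_ones n j : nwords (fun w => ones w == j) n = 'C(n, j).
Proof.
elim: n j => [|n IH] j; first by case: j.
rewrite nwordsS (@eq_nwords n _ (fun w => ones w == j)) // IH.
case: j => [|j].
  by rewrite (@eq_nwords n _ pred0) // /nwords count_pred0 !bin0.
by rewrite (@eq_nwords n _ (fun w => ones w == j)) // IH binS.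
Qed.

Lemma bin_leq_exp2 n j : 'C(n, j) <= 2 ^ n.
Proof. by rewrite -nwords_ones nwords_max. Qed.

(** * Binomial estimates *)

Lemma bin_odd_sym k : 'C(k.*2.+1, k.+1) = 'C(k.*2.+1, k).
Proof. by rewrite -bin_sub; [congr 'C(_, _); lia | lia]. Qed.

Lemma bin_odd_central k : 'C(k.*2.+1, k) * k.+1 = 'C(k.*2, k) * k.*2.+1.
Proof. by have := mul_bin_diag k.*2.+1 k; rewrite /= bin_odd_sym; lia. Qed.

Lemma bin_central_rec k : 'C(k.+1.*2, k.+1) * k.+1 = 'C(k.*2, k) * (k.*2.+1).*2.
Proof.
by rewrite doubleS binS bin_odd_sym mulnDl bin_odd_central -mulnDr addnn.
Qed.

Lemma bin_central_sq_leq k : 'C(k.*2, k) ^ 2 * (3 * k + 1) <= 16 ^ k.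
Proof.
elim: k => [|k IH]; first by rewrite bin0.
have pos : 0 < k.+1 ^ 2 * (3 * k + 1) by rewrite muln_gt0 expn_gt0; lia.
rewrite -(leq_pmul2r pos).
have -> : 'C(k.+1.*2, k.+1) ^ 2 * (3 * k.+1 + 1) * (k.+1 ^ 2 * (3 * k + 1)) =
          ('C(k.*2, k) ^ 2 * (3 * k + 1)) * ((k.*2.+1).*2 ^ 2 * (3 * k.+1 + 1)).
  by rewrite mulnACA -expnMn bin_central_rec expnMn; ring.
apply: leq_trans (leq_mul IH (leqnn _)) _.
rewrite [16 ^ k.+1]expnS (mulnC 16) -mulnA leq_pmul2l ?expn_gt0 //.
rewrite -!mul2n !expnS !expn0 !muln1; nia.
Qed.

Lemma bin_central_geq k : 4 ^ k <= 'C(k.*2, k) * k.*2.+1.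
Proof.
elim: k => [|k IH]; first by rewrite bin0.
rewrite -(leq_pmul2r (ltn0Sn k)) mulnAC bin_central_rec [4 ^ _]expnS.
move: IH; move: (4 ^ k) ('C(k.*2, k)) => X a IH; rewrite -!mul2n; nia.
Qed.

Lemma bin_odd_sq_leq k : 'C(k.*2.+1, k) ^ 2 * k.*2.+2 <= 4 ^ k.*2.+1.
Proof.
have pos : 0 < k.+1 ^ 2 * (3 * k + 1) by rewrite muln_gt0 expn_gt0; lia.
rewrite -(leq_pmul2r pos).
have -> : 'C(k.*2.+1, k) ^ 2 * k.*2.+2 * (k.+1 ^ 2 * (3 * k + 1)) =
          ('C(k.*2, k) ^ 2 * (3 * k + 1)) * (k.*2.+1 ^ 2 * k.*2.+2).
  by rewrite mulnACA -expnMn bin_odd_central expnMn; ring.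
apply: leq_trans (leq_mul (bin_central_sq_leq k) (leqnn _)) _.
have -> : 4 ^ k.*2.+1 = 16 ^ k * 4 by rewrite expnSr -mul2n expnM.
rewrite -mulnA leq_pmul2l ?expn_gt0 //.
rewrite -!mul2n !expnS !expn0 !muln1; nia.
Qed.

Lemma leq_bin_succ n i : i.*2 < n -> 'C(n, i) <= 'C(n, i.+1).
Proof.
move=> lt_in; rewrite -(leq_pmul2l (ltn0Sn i)) mul_bin_left leq_mul2r.
by apply/orP; right; lia.
Qed.

Lemma leq_bin_half n j : 'C(n, j) <= 'C(n, n./2).
Proof.
have up d : 'C(n, n./2 - d) <= 'C(n, n./2).
  elim: d => [|d IH]; first by rewrite subn0.
  apply: leq_trans IH; case: (ltnP d n./2) => hd.
    rewrite (_ : n./2 - d = (n./2 - d.+1).+1); last by lia.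
    by apply: leq_bin_succ; lia.
  by rewrite (_ : n./2 - d.+1 = n./2 - d); last by lia.
case: (leqP j n./2) => [le_j|lt_j]; first by have := up (n./2 - j); rewrite subKn.
case: (leqP j n) => [le_jn|/bin_small->//].
by rewrite -bin_sub //; have := up (n./2 - (n - j)); rewrite subKn //; lia.
Qed.

Lemma bin_sq_leq n j : 'C(n, j) ^ 2 * n.+1 <= 4 ^ n.
Proof.
apply: leq_trans (_ : 'C(n, n./2) ^ 2 * n.+1 <= _).
  by rewrite leq_mul2r leq_exp2r // leq_bin_half orbT.
rewrite -[n](odd_double_half n); case: (odd n) => /=.
  by rewrite uphalf_double add1n bin_odd_sq_leq.
rewrite add0n half_double (_ : 4 ^ _ = 16 ^ n./2); last by rewrite -mul2n expnM.
apply: leq_trans (bin_central_sq_leq n./2); rewrite leq_mul2l; apply/orP; right; lia.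
Qed.

(** * Matching and uniform languages *)

Lemma appE (T : Type) (u v : list T) : app u v = u ++ v.
Proof. by elim: u => //= x u ->. Qed.

Lemma lengthE (T : Type) (w : list T) : length w = size w.
Proof. by elim: w => //= x w ->. Qed.

Fixpoint rmatch (r : regex) (w : seq bool) : bool :=
  match r with
  | REps => w == [::]
  | RLit b => w == [:: b]
  | RUnion r1 r2 => rmatch r1 w || rmatch r2 w
  | RConcat r1 r2 =>
      has (fun i => rmatch r1 (take i w) && rmatch r2 (drop i w)) (iota 0 (size w).+1)
  end.

Lemma rmatch_cat r1 r2 u v : rmatch r1 u -> rmatch r2 v -> rmatch (RConcat r1 r2) (u ++ v).
Proof.
move=> m1 m2; apply/hasP; exists (size u); first by rewrite mem_iota size_cat; lia.
by rewrite take_size_cat // drop_size_cat //; apply/andP.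
Qed.

Lemma rmatch_catP r1 r2 w :
  rmatch (RConcat r1 r2) w -> exists u v, [/\ w = u ++ v, rmatch r1 u & rmatch r2 v].
Proof. by move=> /hasP[i _ /andP[m1 m2]]; exists (take i w), (drop i w); rewrite cat_take_drop. Qed.

Lemma rmatchP r w : matches r w <-> rmatch r w.
Proof.
elim: r w => [|b|r1 IH1 r2 IH2|r1 IH1 r2 IH2] w /=.
- by split=> [->|/eqP].
- by split=> [->|/eqP].
- by rewrite IH1 IH2; split=> [[] ->|/orP[]]; rewrite ?orbT //; [left|right].
- split=> [[u [v [-> [m1 m2]]]]|/rmatch_catP[u [v [-> m1 m2]]]].
    by rewrite appE; apply: rmatch_cat; [apply/IH1|apply/IH2].
  by exists u, v; rewrite appE; split=> //; split; [apply/IH1|apply/IH2].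
Qed.

Lemma rmatch_nonempty r : exists w, rmatch r w.
Proof.
elim: r => [|b|r1 [u m1] r2 _|r1 [u m1] r2 [v m2]].
- by exists [::].
- by exists [:: b]; rewrite /= eqxx.
- by exists u; rewrite /= m1.
- by exists (u ++ v); apply: rmatch_cat.
Qed.

Lemma nwords_union r1 r2 l :
  nwords (rmatch (RUnion r1 r2)) l <= nwords (rmatch r1) l + nwords (rmatch r2) l.
Proof. by rewrite /nwords -count_predUI leq_addr. Qed.

Definition uniform (P : pred (seq bool)) n j := forall w, P w -> size w = n /\ ones w = j.

Lemma nwords_uniform P n j : uniform P n j -> nwords P n <= 'C(n, j).
Proof. by move=> unif; rewrite -nwords_ones; apply: sub_nwords => w _ /unif[_ ->]. Qed.

Lemma uniform_catpred X Y a b i j :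
  uniform X a i -> uniform Y b j -> uniform (catpred a X Y) (a + b) (i + j).
Proof.
move=> uX uY w /andP[/uX[sa oa] /uY[sb ob]].
by rewrite -(cat_take_drop a w) size_cat ones_cat sa sb oa ob.
Qed.

Lemma uniform_concat r1 r2 l j : uniform (rmatch (RConcat r1 r2)) l j ->
  exists l1 l2 j1 j2, [/\ l1 + l2 = l, uniform (rmatch r1) l1 j1 & uniform (rmatch r2) l2 j2].
Proof.
move=> unif; have [v1 m1] := rmatch_nonempty r1; have [v2 m2] := rmatch_nonempty r2.
have [s12 o12] := unif _ (rmatch_cat m1 m2); rewrite size_cat ones_cat in s12 o12.
exists (size v1), (size v2), (ones v1), (ones v2); split=> // v m.
- have := unif _ (rmatch_cat m m2); rewrite size_cat ones_cat; lia.
- have := unif _ (rmatch_cat m1 m); rewrite size_cat ones_cat; lia.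
Qed.

Lemma nwords_concat r1 r2 l1 l2 j1 : uniform (rmatch r1) l1 j1 ->
  nwords (rmatch (RConcat r1 r2)) (l1 + l2) = nwords (rmatch r1) l1 * nwords (rmatch r2) l2.
Proof.
move=> unif; rewrite -nwords_catpred; apply: eq_nwords => w _; apply/idP/idP.
  move=> /rmatch_catP[u [v [-> m1 m2]]]; have [su _] := unif _ m1.
  by rewrite /catpred -su take_size_cat ?drop_size_cat ?m1.
by move=> /andP[m1 m2]; rewrite -(cat_take_drop l1 w) rmatch_cat.
Qed.

(** * The counting bound *)

Definition level m := trunc_log 2 m %/ 3.

Definition gap m := 2 ^ 'C(level m, 2).

Lemma gap_gt0 m : 0 < gap m.
Proof. by rewrite expn_gt0. Qed.

Lemma level_le1 m : m <= 1 -> level m = 0.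
Proof. by case: m => [|[|]]. Qed.

Lemma level_leS m l : m < 3 * l -> level m <= (level l).+1.
Proof.
move=> lt_ml; have l_gt0 : 0 < l by lia.
have : trunc_log 2 m <= (trunc_log 2 l).+2.
  rewrite -!trunc_log2_double ?double_gt0 //; apply: leq_trunc_log; rewrite -!mul2n; lia.
rewrite /level; lia.
Qed.

Lemma exp_level_leq m : 0 < m -> 8 ^ level m <= m.
Proof.
move=> m_gt0; apply: leq_trans (trunc_logP (isT : 1 < 2) m_gt0).
by rewrite (_ : 8 = 2 ^ 3) // -expnM leq_exp2l // /level; lia.
Qed.

Lemma bin_mul_exp2_leq n j K : 4 ^ K <= n -> 'C(n, j) * 2 ^ K <= 2 ^ n.
Proof.
have sq2 k : (2 ^ k) ^ 2 = 4 ^ k by rewrite -expnM mulnC expnM.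
move=> le_Kn; rewrite -leq_sqr expnMn !sq2.
by apply: leq_trans (bin_sq_leq n j); rewrite leq_mul2l (leq_trans le_Kn) ?orbT.
Qed.

(* At level m = K.+1 the context has a part of length at least 4^K, whose binomial
   coefficient saves the factor 2^K >= gap m / gap l. *)
Lemma gap_split o l r m ja jb : o + l + r = m -> m < 3 * l -> 3 * l <= 2 * m ->
  'C(o, ja) * 'C(r, jb) * gap m <= gap l * 2 ^ (o + r).
Proof.
move=> sum_m lt_ml le_lm; have := level_leS lt_ml; rewrite /gap.
case Km : (level m) => [|K] le_K.
  rewrite bin0n /= muln1 expnD; apply: leq_trans _ (leq_pmull _ (gap_gt0 l)).
  exact: leq_mul (bin_leq_exp2 _ _) (bin_leq_exp2 _ _).
have gap_m : 2 ^ 'C(K.+1, 2) <= 2 ^ 'C(level l, 2) * 2 ^ K.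
  by rewrite -expnD leq_exp2l // binS bin1 leq_add2r leq_bin2l //; lia.
have big : 4 ^ K <= maxn o r.
  have m8 : 8 ^ K.+1 <= m by rewrite -Km; apply: exp_level_leq; lia.
  have : 4 ^ K <= 8 ^ K by rewrite (_ : 8 = 4 * 2) // expnMn leq_pmulr ?expn_gt0.
  rewrite expnS in m8; lia.
apply: leq_trans (leq_mul (leqnn _) gap_m) _.
rewrite mulnCA leq_mul2l expnD; apply/orP; right.
case: (leqP r o) => [le_ro|lt_or].
  rewrite mulnAC; apply: leq_mul (bin_mul_exp2_leq _ _) (bin_leq_exp2 _ _).
  by rewrite (maxn_idPl le_ro) in big.
rewrite -mulnA; apply: leq_mul (bin_leq_exp2 _ _) (bin_mul_exp2_leq _ _).
by rewrite (maxn_idPr (ltnW lt_or)) in big.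
Qed.

Lemma nwords_level0 (A X B : pred (seq bool)) o l r m :
  o + l + r = m -> level m = 0 -> nwords A o * nwords X l * nwords B r * gap m <= 2 ^ m.
Proof.
move=> <- lvl0; rewrite /gap lvl0 bin0n /= muln1 !expnD.
by do 2?apply: leq_mul; apply: nwords_max.
Qed.

Lemma rsize_gt0 r : 0 < rsize r.
Proof. by case: r. Qed.

Section InductionStep.

Variable m : nat.
Hypothesis IHm : forall l x j, l < m -> uniform (rmatch x) l j ->
  nwords (rmatch x) l * gap l <= rsize x * 2 ^ l.

Lemma balanced_bound (A B : pred (seq bool)) x o l r ja jx jb :
  uniform A o ja -> uniform (rmatch x) l jx -> uniform B r jb ->
  o + l + r = m -> m < 3 * l -> 3 * l <= 2 * m ->
  nwords A o * nwords (rmatch x) l * nwords B r * gap m <= rsize x * 2 ^ m.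
Proof.
move=> uA ux uB sum_m lt_ml le_lm; have lt_lm : l < m by lia.
rewrite (_ : _ * _ * _ * _ = nwords (rmatch x) l * (nwords A o * nwords B r * gap m));
  last by ring.
apply: (@leq_trans (nwords (rmatch x) l * (gap l * 2 ^ (o + r)))).
  rewrite leq_mul2l; apply/orP; right; apply: leq_trans (gap_split ja jb sum_m lt_ml le_lm).
  by rewrite leq_mul2r leq_mul ?nwords_uniform ?orbT.
rewrite mulnA (_ : m = l + (o + r)); last by lia.
by rewrite [2 ^ (l + _)]expnD mulnA leq_mul2r (IHm lt_lm ux) orbT.
Qed.

Definition bounded_in_context x := forall (A B : pred (seq bool)) o l r ja jx jb,
  uniform A o ja -> uniform (rmatch x) l jx -> uniform B r jb ->
  o + l + r = m -> 2 * m < 3 * l ->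
  nwords A o * nwords (rmatch x) l * nwords B r * gap m <= rsize x * 2 ^ m.

Lemma bounded_in_context_gt_third x (A B : pred (seq bool)) o l r ja jx jb :
  bounded_in_context x ->
  uniform A o ja -> uniform (rmatch x) l jx -> uniform B r jb ->
  o + l + r = m -> m < 3 * l ->
  nwords A o * nwords (rmatch x) l * nwords B r * gap m <= rsize x * 2 ^ m.
Proof.
move=> bx uA ux uB sum_m lt_ml.
case: (ltnP (2 * m) (3 * l)) => [lt2_ml|le_lm]; first exact: bx uA ux uB sum_m lt2_ml.
exact: balanced_bound uA ux uB sum_m lt_ml le_lm.
Qed.

Lemma context_bound x : bounded_in_context x.
Proof.
elim: x => [|b|x1 IH1 x2 IH2|x1 IH1 x2 IH2] A B o l r ja jx jb uA ux uB sum_m lt_ml.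
- by have [/= l0 _] := ux [::] (eqxx _); lia.
- have [/= l1 _] := ux [:: b] (eqxx _).
  by rewrite mul1n; apply: nwords_level0 sum_m (level_le1 _); lia.
- have u1 : uniform (rmatch x1) l jx by move=> w m1; apply: ux; rewrite /= m1.
  have u2 : uniform (rmatch x2) l jx by move=> w m2; apply: ux; rewrite /= m2 orbT.
  apply: leq_trans (_ : nwords A o * (nwords (rmatch x1) l + nwords (rmatch x2) l) *
                        nwords B r * gap m <= _).
    by rewrite !leq_mul2r leq_mul2l nwords_union !orbT.
  rewrite mulnDr !mulnDl.
  apply: leq_trans (leq_add (IH1 _ _ _ _ _ _ _ _ uA u1 uB sum_m lt_ml)
                            (IH2 _ _ _ _ _ _ _ _ uA u2 uB sum_m lt_ml)) _.
  by rewrite -mulnDl leq_mul2r /=; lia.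
- have [l1 [l2 [j1 [j2 [sum_l u1 u2]]]]] := uniform_concat ux.
  rewrite -sum_l (nwords_concat _ _ u1) mulnA.
  apply: leq_trans (_ : maxn (rsize x1) (rsize x2) * 2 ^ m <= _); last first.
    by rewrite leq_pmul2r ?expn_gt0 //= geq_max; lia.
  (* descend into the longer factor, the other one joins the context *)
  case: (leqP l2 l1) => [le21|lt12].
    rewrite -(mulnA _ (nwords (rmatch x2) l2)) -(nwords_catpred l2 r (rmatch x2) B).
    apply: leq_trans (bounded_in_context_gt_third IH1 uA u1 (uniform_catpred u2 uB) _ _) _;
      [lia | lia | by rewrite leq_mul2r leq_maxl orbT].
  rewrite -(nwords_catpred o l1 A (rmatch x1)).
  apply: leq_trans (bounded_in_context_gt_third IH2 (uniform_catpred uA u1) u2 uB _ _) _;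
    [lia | lia | by rewrite leq_mul2r leq_maxr orbT].
Qed.

End InductionStep.

Lemma nwords_rmatch_bound m x j : uniform (rmatch x) m j ->
  nwords (rmatch x) m * gap m <= rsize x * 2 ^ m.
Proof.
elim/ltn_ind: m x j => m IHm x j ux.
have u0 : uniform (pred1 [::]) 0 0 by move=> w /eqP->.
have := @context_bound m (fun l x j lt => IHm l lt x j) x _ _ 0 m 0 0 j 0 u0 ux u0.
rewrite (_ : nwords (pred1 [::]) 0 = 1) // mul1n muln1 add0n addn0.
case: (posnP m) => [m0|m_gt0]; last by apply; lia.
move=> _; rewrite m0 /gap level_le1 // muln1 expn0 muln1.
exact: leq_trans (nwords_max _ 0) (rsize_gt0 x).
Qed.

(** * Dyck words and the cycle lemma *)

Fixpoint height (h : nat) (w : seq bool) : option nat :=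
  match w with
  | [::] => Some h
  | b :: w' => if b then (if h is h'.+1 then height h' w' else None) else height h.+1 w'
  end.

Definition balanced (w : seq bool) := height 0 w == Some 0.

Lemma height_cat h u v : height h (u ++ v) = obind (height^~ v) (height h u).
Proof. by elim: u h => [|[] u IH] [|h] //=. Qed.

Lemma height_addn h c w e : height h w = Some e -> height (h + c) w = Some (e + c).
Proof. by elim: w h => [|[] w IH] [|h] //= => [[->]|[->]|/IH|/IH|/IH]. Qed.

Lemma height_split h w e : height h.+1 w = Some e -> e <= h ->
  exists u v, [/\ w = u ++ true :: v, balanced u & height h v = Some e].
Proof.
have [n] := ubnP (size w); elim: n w h => // n IH [|b w] h //=; first by move=> _ [<-]; lia.
rewrite ltnS => size_w; case: b => [hw|].
  by exists [::], w.
move=> hw le_eh; have [u1 [v1 [eq_w bal_u1 hv1]]] := IH w h.+1 size_w hw (leqW le_eh).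
have size_v1 : size v1 < n by move: size_w; rewrite eq_w size_cat /=; lia.
have [u2 [v2 [eq_v1 bal_u2 hv2]]] := IH v1 h size_v1 hv1 le_eh.
exists (false :: u1 ++ true :: u2), v2; split=> //; first by rewrite eq_w eq_v1 /= -catA.
by rewrite /balanced /= height_cat (height_addn 1 (eqP bal_u1)) /=.
Qed.

Lemma dyck_balanced w : balanced w -> dyck w.
Proof.
have [n] := ubnP (size w); elim: n w => // n IH [|[] w] /=; rewrite ?ltnS => size_w hw //.
  exact: dyck_nil.
have [u [v [eq_w bal_u hv]]] := height_split (eqP hw) (leqnn 0).
have [size_u size_v] : size u < n /\ size v < n.
  by move: size_w; rewrite eq_w size_cat /=; lia.
rewrite eq_w (_ : false :: _ = app (app [:: false] (app u [:: true])) v); last first.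
  by rewrite !appE /= -catA.
by apply: dyck_cat; [apply/dyck_wrap/IH | apply: IH; rewrite /balanced ?hv].
Qed.

Lemma dyck_ones w : dyck w -> (ones w).*2 = size w.
Proof. by elim=> //= [v w' _ IHv _ IHw|w' _ IHw]; rewrite appE ones_cat size_cat /=; lia. Qed.

Lemma height_prefix h w : (forall k, (ones (take k w)).*2 <= h + size (take k w)) ->
  height h w = Some (h + size w - (ones w).*2).
Proof.
elim: w h => [|b w IH] h prefix /=; first by rewrite addn0 subn0.
have prefix' k : (b + ones (take k w)).*2 <= h + (size (take k w)).+1 := prefix k.+1.
case: b {prefix} prefix' => prefix'; last first.
  by rewrite IH => [|k]; [congr Some; lia | have := prefix' k; lia].
case: h prefix' => [|h] prefix'; first by have := prefix' 0; rewrite take0.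
by rewrite IH => [|k]; [congr Some; lia | have := prefix' k; lia].
Qed.

Lemma ones_rot i w : ones (rot i w) = ones w.
Proof. by rewrite /rot ones_cat addnC -ones_cat cat_take_drop. Qed.

Lemma balanced_rot w : (ones w).*2 = size w -> exists2 i, i <= size w & balanced (rot i w).
Proof.
(* Cycle lemma: cut after a prefix maximizing twice its number of ones minus its length. *)
move=> ones_w; pose F j := (ones (take j w)).*2 + (size w - j).
have [i le_iw imax] : exists2 i, i <= size w & forall j, j <= size w -> F j <= F i.
  have [i _ imax] := @arg_maxnP _ (ord0 : 'I_(size w).+1) xpredT F isT.
  exists i => [|j le_jw]; first by rewrite -ltnS.
  have lt_j : j < (size w).+1 by rewrite ltnS.
  by have := imax (Ordinal lt_j) isT.
have ones_i : ones (take i w) + ones (drop i w) = ones w by rewrite -ones_cat cat_take_drop.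
exists i => //; rewrite /balanced height_prefix => [|k].
  by rewrite size_rot ones_rot ones_w subnn.
rewrite /rot take_cat size_drop; case: ltnP => [lt_k|ge_k].
  have := imax (i + k); rewrite /F takeD ones_cat size_takel ?size_drop; lia.
rewrite -take_min ones_cat size_cat size_drop size_takel; last by lia.
have := imax (minn (k - (size w - i)) i); rewrite /F; lia.
Qed.

Lemma nwords_rot (P : pred (seq bool)) i n : nwords (fun w => P (rot i w)) n = nwords P n.
Proof.
rewrite /nwords -(count_map (rot i) P); apply/permP; apply: uniq_perm.
- by rewrite (map_inj_uniq (@rot_inj i _)) uniq_words.
- exact: uniq_words.
- move=> w; rewrite -{1}(rotrK i w) (mem_map (@rot_inj i _)) !mem_words size_rotr //.
Qed.

Lemma count_has_leq (I T : Type) (P : I -> pred T) (s : seq I) (l : seq T) c :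
  (forall i, count (P i) l = c) -> count (fun x => has (P^~ x) s) l <= size s * c.
Proof.
move=> cnt_P; elim: s => [|i s IH] /=; first by rewrite count_pred0.
rewrite mulSn -{1}(cnt_P i); apply: leq_trans (leq_add (leqnn _) IH).
by rewrite -count_predUI leq_addr.
Qed.

Lemma nwords_balanced_geq n : 4 ^ n <= n.*2.+1 ^ 2 * nwords balanced n.*2.
Proof.
have bin : 'C(n.*2, n) <= n.*2.+1 * nwords balanced n.*2.
  rewrite -nwords_ones -(size_iota 0 n.*2.+1).
  apply: leq_trans _ (@count_has_leq _ _ (fun i w => balanced (rot i w)) _ (words n.*2) _
                    (fun i => nwords_rot _ i _)).
  apply: sub_nwords => w size_w /eqP ones_w.
  have [|i le_i bal] := @balanced_rot w; first by rewrite ones_w size_w.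
  by apply/hasP; exists i; rewrite // mem_iota; lia.
apply: leq_trans (bin_central_geq n) _.
by rewrite (expnS _ 1) expn1 -mulnA mulnC leq_mul2l bin orbT.
Qed.

Lemma dyck_regex_gap n r : describes r (D2n n) -> gap n.*2 <= n.*2.+1 ^ 2 * rsize r.
Proof.
move=> desc.
have unif : uniform (rmatch r) n.*2 n.
  by move=> w /rmatchP/desc[/dyck_ones ones_w]; rewrite lengthE; lia.
have sub_r : nwords balanced n.*2 <= nwords (rmatch r) n.*2.
  apply: sub_nwords => w size_w /dyck_balanced dyck_w; apply/rmatchP/desc.
  by split; rewrite // lengthE size_w; lia.
have count_r : nwords balanced n.*2 * gap n.*2 <= rsize r * 4 ^ n.
  apply: leq_trans (leq_mul sub_r (leqnn _)) _.
  by rewrite (_ : 4 = 2 ^ 2) // -expnM mul2n (nwords_rmatch_bound unif).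
rewrite -(@leq_pmul2r (4 ^ n)) ?expn_gt0 // mulnC.
apply: leq_trans (leq_mul (nwords_balanced_geq n) (leqnn (gap n.*2))) _.
by rewrite -mulnA -(mulnA (_ ^ 2)) leq_mul2l count_r orbT.
Qed.

(** * Asymptotics *)

Lemma sq_leq_bin2_third t : 100 <= t -> t.+1 ^ 2 + 100 * (2 * t + 4) <= 100 * 'C(t.+1 %/ 3, 2).
Proof. by move=> t100; rewrite bin2; nia. Qed.

Lemma dyck_regex_exp2 n r : 2 ^ 100 <= n -> describes r (D2n n) ->
  2 ^ ((trunc_log 2 n).+1 ^ 2) <= rsize r ^ 100.
Proof.
move=> le_n desc; have n_gt0 : 0 < n by apply: leq_trans le_n; rewrite expn_gt0.
set t := trunc_log 2 n; have t100 : 100 <= t by apply: trunc_log_max.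
have := dyck_regex_gap desc; rewrite /gap /level trunc_log2_double // -/t => gap_n.
have sq : n.*2.+1 ^ 2 <= 2 ^ (2 * t + 4).
  have : n.*2.+1 <= 2 ^ t.+2.
    by have := @trunc_log_ltn 2 n isT; rewrite -/t [2 ^ t.+2]expnS; lia.
  by rewrite -leq_sqr -expnM (_ : t.+2 * 2 = 2 * t + 4) //; lia.
rewrite -(@leq_pmul2r (2 ^ (100 * (2 * t + 4)))) ?expn_gt0 // -expnD.
have -> : rsize r ^ 100 * 2 ^ (100 * (2 * t + 4)) = (2 ^ (2 * t + 4) * rsize r) ^ 100.
  by rewrite expnMn -expnM mulnC (mulnC 100).
apply: leq_trans (leq_pexp2l (isT : 0 < 2) (sq_leq_bin2_third t100)) _.
rewrite mulnC expnM leq_exp2r //; apply: leq_trans gap_n _.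
by rewrite leq_mul2r sq orbT.
Qed.

Lemma INR_expn a k : INR (a ^ k) = (INR a ^ k)%R.
Proof. by elim: k => // k IH; rewrite expnS mult_INR IH. Qed.

Local Open Scope R_scope.

Lemma ln_le x y : 0 < x -> x <= y -> ln x <= ln y.
Proof. by move=> x_gt0 [/(ln_increasing _ _ x_gt0)/Rlt_le | ->]; [|apply: Rle_refl]. Qed.

Lemma Rpower_ln_leq (n m s : nat) :
  (0 < n)%N -> (n <= 2 ^ s)%N -> (2 ^ (s ^ 2) <= m ^ 100)%N ->
  Rpower (INR n) (1 / 100 * ln (INR n)) <= INR m.
Proof.
have INR2 : INR 2 = 2 by rewrite /=; lra.
move=> /leP/le_INR /= n_ge1 /leP/le_INR n_le /leP/le_INR m_ge.
rewrite INR_expn INR2 in n_le; rewrite !INR_expn INR2 in m_ge.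
have pow2_gt0 k : 0 < 2 ^ k by apply: pow_lt; lra.
have m_gt0 : 0 < INR m.
  case: m m_ge => [|m'] m_ge; last by apply: lt_0_INR; lia.
  by have := pow2_gt0 (s ^ 2)%N; rewrite pow_i in m_ge; [lra | lia].
have ln2_le1 : ln 2 <= 1.
  by rewrite -(ln_exp 1); apply: ln_le; [lra | have := exp_ineq1 1 R1_neq_R0; lra].
have ln2_gt0 : 0 < ln 2 by have := ln_lt_2; lra.
have lnn_ge0 : 0 <= ln (INR n) by rewrite -ln_1; apply: ln_le; lra.
have lnn_le : ln (INR n) <= INR s * ln 2 by rewrite -ln_pow; [apply: ln_le|]; lra.
have lnm_ge : INR (s ^ 2) * ln 2 <= INR 100 * ln (INR m).
  by rewrite -!ln_pow; try lra; apply: ln_le; [apply: pow2_gt0 | exact: m_ge].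
rewrite INR_expn (_ : INR 100 = 100) in lnm_ge; last by rewrite INR_IZR_INZ.
rewrite /Rpower -[X in _ <= X](exp_ln _ m_gt0).
have key : 1 / 100 * ln (INR n) * ln (INR n) <= ln (INR m) by nra.
by case: (Rle_lt_or_eq_dec _ _ key) => [/exp_increasing/Rlt_le|->]; [|apply: Rle_refl].
Qed.

Theorem corollary5p4 :
  exists c : R, 0 < c /\ exists N : nat, forall n : nat, (N <= n)%coq_nat ->
    forall m : nat, is_rpn (D2n n) m ->
      Rpower (INR n) (c * ln (INR n)) <= INR m.
Proof.
exists (1 / 100); split; first lra.
exists (2 ^ 100)%N => n /leP le_n m [[r [desc <-]] _].
apply: (@Rpower_ln_leq n (rsize r) (trunc_log 2 n).+1).
- by apply: leq_trans le_n; rewrite expn_gt0.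
- exact/ltnW/trunc_log_ltn.
- exact: dyck_regex_exp2 le_n desc.
Qed.
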